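(* For every integer $L\ge 0$ and every integer $n\ge 0$, $$b_L(n+1)=\frac{1}{n+1}\sum_{k=0}^{n}\binom{n+1}{k}^{L+1}(n+1-k)\,b_L(k)=\sum_{k=0}^{n}\binom{n}{k}\binom{n+1}{k}^{L}b_L(k),\qquad b_L(0)=1.$$ Consequently every $b_L(n)$ is a positive integer.
   Context: For an integer $L\ge 0$ let ${}_0F_L(z)=\sum_{n=0}^{\infty}\frac{z^n}{(n!)^{L+1}}$ (the hypergeometric series ${}_0F_L(1,\ldots,1;z)$ with $L$ parameters equal to $1$; e.g. ${}_0F_0(z)=e^z$). Define the real numbers $b_L(n)$, $n\ge 0$, by the formal power series identity $\exp\big({}_0F_L(z)-1\big)=\sum_{n=0}^{\infty}b_L(n)\frac{z^n}{(n!)^{L+1}}$. *)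

(* Formal power series are handled coefficientwise over rat. *)
From HB Require Import structures.
From mathcomp Require Import all_boot all_order all_algebra.
Set Implicit Arguments. Unset Strict Implicit. Unset Printing Implicit Defensive.
Import Order.TTheory GRing.Theory Num.Theory.
Local Open Scope ring_scope.

(* Truncation to degree <= N of  0F_L(z) - 1 = sum_{i>=1} z^i / (i!)^(L+1). *)
Definition G_trunc (L N : nat) : {poly rat} :=
  \poly_(i < N.+1) (if i == 0%N then 0 else ((i`!)%:R ^+ L.+1)^-1).

(* Coefficient of z^N in exp(0F_L(z) - 1) = sum_m (0F_L(z)-1)^m / m!.
   Since 0F_L - 1 has zero constant term, only m <= N contribute to z^N,
   and only the terms of degree <= N of 0F_L - 1 matter. *)
Definition expF_coef (L N : nat) : rat :=
  \sum_(m < N.+1) ((G_trunc L N) ^+ m)`_N / (m`!)%:R.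

(* b_L(N) defined by exp(0F_L(z)-1) = sum_N b_L(N) z^N / (N!)^(L+1). *)
Definition bL (L N : nat) : rat := (N`!)%:R ^+ L.+1 * expF_coef L N.

From HB Require Import structures.
From mathcomp Require Import all_boot all_order all_algebra.
From mathcomp Require Import zify ring.
Import Order.TTheory GRing.Theory Num.Theory.
Local Open Scope ring_scope.

(* With G = 0F_L - 1 and E = exp G we have E' = E G'; comparing coefficients
   of z^n gives (n+1) e_(n+1) = sum_k e_k (n+1-k) / ((n+1-k)!)^(L+1), which
   after multiplying by ((n+1)!)^(L+1) is the first recursion for b_L.  The
   second one follows from (n+1) C(n,k) = (n+1-k) C(n+1,k), and positivity
   and integrality follow from it by strong induction since the k = 0 term
   is b_L(0) = 1. *)

Lemma coef_exp_eq (R : nzSemiRingType) (p q : {poly R}) (N : nat) :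
  (forall i, (i <= N)%N -> p`_i = q`_i) ->
  forall m j, (j <= N)%N -> (p ^+ m)`_j = (q ^+ m)`_j.
Proof.
move=> eq_pq; elim=> [|m IHm] j le_jN; first by rewrite !expr0.
rewrite !exprS !coefM; apply: eq_bigr => i _.
have lt_ij := ltn_ord i.
rewrite eq_pq ?IHm //; lia.
Qed.

Lemma coef_exp_lt (R : nzSemiRingType) (p : {poly R}) :
  p`_0 = 0 -> forall m j, (j < m)%N -> (p ^+ m)`_j = 0.
Proof.
move=> p0; elim=> [|m IHm] j lt_jm //.
rewrite exprS coefM; apply: big1 => -[[|i] lt_ij] _ /=; first by rewrite p0 mul0r.
rewrite IHm ?mulr0 //; lia.
Qed.

Definition exp_trunc {R : numFieldType} (K : nat) (p : {poly R}) : {poly R} :=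
  \sum_(m < K) (m`!%:R)^-1 *: p ^+ m.

Lemma deriv_exp_trunc (R : numFieldType) (K : nat) (p : {poly R}) :
  (exp_trunc K.+1 p)^`() = exp_trunc K p * p^`().
Proof.
rewrite /exp_trunc raddf_sum big_ord_recl /= expr0 derivZ derivC scaler0 add0r.
rewrite mulr_suml; apply: eq_bigr => i _.
rewrite derivZ deriv_exp /= -scaler_nat scalerA factS natrM invfM.
rewrite mulrC mulrA mulfV ?mul1r ?pnatr_eq0 //.
by rewrite -scalerAl mulrC.
Qed.

Lemma coef_exp_trunc (R : numFieldType) (K j : nat) (p : {poly R}) :
  (exp_trunc K p)`_j = \sum_(m < K) (p ^+ m)`_j / (m`!)%:R.
Proof. by rewrite coef_sum; apply: eq_bigr => m _; rewrite coefZ mulrC. Qed.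

Lemma G_trunc_coef0 (L M : nat) : (G_trunc L M)`_0 = 0.
Proof. by rewrite coef_poly. Qed.

(* Since G has no constant term, G^m contributes nothing to z^j for m > j. *)
Lemma expF_coefE (L M K j : nat) : (j <= M)%N -> (j < K)%N ->
  expF_coef L j = (exp_trunc K (G_trunc L M))`_j.
Proof.
move=> le_jM lt_jK; rewrite coef_exp_trunc /expF_coef.
rewrite (big_ord_widen K (fun m => ((G_trunc L j) ^+ m)`_j / (m`!)%:R)) //.
rewrite big_mkcond; apply: eq_bigr => m _.
case: ifP => [_|/negbT]; last first.
  by rewrite -leqNgt => lt_jm; rewrite coef_exp_lt ?mul0r ?G_trunc_coef0.
congr (_ / _); apply: coef_exp_eq (leqnn j) => i le_ij.
rewrite !coef_poly.
have -> : (i < M.+1)%N by lia.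
by have -> : (i < j.+1)%N by lia.
Qed.

Lemma expF_coef_rec (L n : nat) : expF_coef L n.+1 *+ n.+1 =
  \sum_(k < n.+1) expF_coef L k * ((((n - k).+1`!)%:R ^+ L.+1)^-1 *+ (n - k).+1).
Proof.
rewrite (expF_coefE L n.+1 n.+3) // -coef_deriv.
rewrite deriv_exp_trunc coefM; apply: eq_bigr => -[k lt_kn] _ /=.
rewrite -(expF_coefE L n.+1); [|lia|lia].
by rewrite coef_deriv coef_poly ifT //; lia.
Qed.

Lemma bL_rec_term (L n k : nat) (e : rat) : (k <= n)%N ->
  ((n.+1)`!%:R ^+ L.+1 : rat) * (e * (((((n - k).+1)`!)%:R ^+ L.+1)^-1 *+ (n - k).+1))
  = 'C(n.+1, k)%:R ^+ L.+1 * (n.+1 - k)%:R * ((k`!)%:R ^+ L.+1 * e).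
Proof.
move=> le_kn.
have fact_split : (n.+1)`! = ('C(n.+1, k) * (k`! * (n - k).+1`!))%N.
  by rewrite -subSn // bin_fact // ltnW.
have : ((((n - k).+1)`!)%:R ^+ L.+1 : rat) != 0.
  by rewrite expf_neq0 // pnatr_eq0 -lt0n fact_gt0.
rewrite fact_split -(mulr_natr ((_ ^+ L.+1)^-1)) subSn //.
set F := ((n - k).+1)`!; clearbody F => F_neq0.
rewrite !natrM !exprMn.
by field.
Qed.

Lemma bL_rec (L n : nat) : bL L n.+1 = (n.+1%:R)^-1 * \sum_(k < n.+1)
  ('C(n.+1, k)%:R ^+ L.+1 * (n.+1 - k)%:R * bL L k).
Proof.
have n1_neq0 : (n.+1%:R : rat) != 0 by rewrite pnatr_eq0.
rewrite /bL -[expF_coef L n.+1](mulfK n1_neq0) mulr_natr expF_coef_rec mulrA mulrC.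
congr (_ * _); rewrite mulr_sumr; apply: eq_bigr => -[k lt_kn] _ /=.
by rewrite bL_rec_term.
Qed.

Lemma bL_rec_binomial (L n : nat) : bL L n.+1 =
  \sum_(k < n.+1) ('C(n, k)%:R * 'C(n.+1, k)%:R ^+ L * bL L k).
Proof.
rewrite bL_rec mulr_sumr; apply: eq_bigr => -[k lt_kn] _ /=.
have n1_neq0 : (n.+1%:R : rat) != 0 by rewrite pnatr_eq0.
have -> : ('C(n, k)%:R : rat) = n.+1%:R^-1 * ((n.+1 - k)%:R * 'C(n.+1, k)%:R).
  by rewrite -natrM -mul_bin_down natrM mulKf.
rewrite exprS; move: n1_neq0; set a := (n.+1%:R : rat).
by clearbody a => a_neq0; field.
Qed.

Lemma bL0 (L : nat) : bL L 0 = 1.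
Proof.
by rewrite /bL /expF_coef big_ord1 expr0 coef1 /= !mul1r expr1n invr1 mul1r.
Qed.

Lemma bL_nat_gt0 (L n : nat) : bL L n \is a Num.nat /\ 0 < bL L n.
Proof.
elim/ltn_ind: n => -[|n] IHn; first by rewrite bL0.
rewrite bL_rec_binomial; split.
  apply: rpred_sum => -[k lt_kn] _ /=.
  have [bk_nat _] := IHn k lt_kn.
  by rewrite -natrX -natrM rpredM ?natr_nat.
rewrite big_ord_recl /= bin0 expr1n !mul1r bL0.
apply: ltr_pwDl => //; apply: sumr_ge0 => -[k lt_kn] _ /=.
have [_ /ltW bk_ge0] := IHn k.+1 lt_kn.
by rewrite mulr_ge0 // mulr_ge0 // exprn_ge0.
Qed.

Theorem mainTheorem1 :
  (forall L n : nat,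
      bL L n.+1
        = (n.+1%:R)^-1 * \sum_(k < n.+1)
              ('C(n.+1, k)%:R ^+ L.+1 * (n.+1 - k)%:R * bL L k)
   /\ bL L n.+1
        = \sum_(k < n.+1) ('C(n, k)%:R * 'C(n.+1, k)%:R ^+ L * bL L k))
  /\ (forall L : nat, bL L 0 = 1)
  /\ (forall L n : nat, exists m : nat, (0 < m)%N /\ bL L n = m%:R).
Proof.
split; first by move=> L n; split; [exact: bL_rec | exact: bL_rec_binomial].
split; first exact: bL0.
move=> L n; have [/natrP [m bL_eq] bL_gt0] := bL_nat_gt0 L n.
by exists m; move: bL_gt0; rewrite bL_eq ltr0n.
Qed.
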